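(* For every $1$-Sperner hypergraph ${\cal H}=(V,{\cal E})$ with $V\neq\emptyset$, we have $|{\cal E}|\le|V|$.
   Context: A hypergraph ${\cal H}=(V,{\cal E})$ consists of a finite vertex set $V$ and a set ${\cal E}$ of subsets of $V$. It is $1$-Sperner if every two distinct hyperedges $e,f$ satisfy $\min\{|e\setminus f|,|f\setminus e|\}=1$. *)

From mathcomp Require Import all_boot.
Set Implicit Arguments. Unset Strict Implicit. Unset Printing Implicit Defensive.

(* A hypergraph on the finite vertex type V is a set E of subsets of V
   (hyperedges); the vertex set is all of V. *)
Definition one_sperner (V : finType) (E : {set {set V}}) : Prop :=
  forall e f, e \in E -> f \in E -> e != f ->
    minn #|e :\: f| #|f :\: e| = 1.

From mathcomp Require Import all_boot zify.
Set Implicit Arguments. Unset Strict Implicit. Unset Printing Implicit Defensive.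

(* Take a hyperedge m of minimum size: every other hyperedge e misses exactly
   one vertex of m. Choosing e with e :\: m as large as possible, the vertex z
   of m missed by e is a pivot: whenever z lies in a but not in b, the edge a
   is contained in b :|: [set z]. For a family on the ground set S, splitting
   at z, the edges through z (with z removed) and the edges avoiding z (with
   the union U of the former removed) are again 1-Sperner, on the disjoint
   ground sets U and S :\ z :\: U. Induction on S gives |E| <= max(|S|, 1). *)

Section OneSperner.
Variable V : finType.
Implicit Types (E : {set {set V}}) (a b e m S U : {set V}).

Lemma setD_card1_sub a b x :
  #|a :\: b| = 1 -> x \in a -> x \notin b -> a :\ x \subset b.
Proof.
move=> /eqP/cards1P[u abu] xa xb.
apply/subsetP => y; rewrite !inE => /andP[yx ya].
apply/negPn/negP => yb; move/negP: yx; apply.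
have: x \in a :\: b by rewrite inE xa xb.
have: y \in a :\: b by rewrite inE ya yb.
by rewrite abu !inE => /eqP-> /eqP->.
Qed.

Lemma setDD_sub a b U : U \subset b -> (a :\: U) :\: (b :\: U) = a :\: b.
Proof.
move=> Ub; apply/setP => y; rewrite !inE.
by case: (boolP (y \in U)) => yU; rewrite ?(subsetP Ub y yU) ?andbF.
Qed.

Lemma one_sperner_subset E E' : E' \subset E -> one_sperner E -> one_sperner E'.
Proof. by move=> /subsetP sE HE e f /sE eE /sE fE; apply: HE. Qed.

Lemma one_sperner_not_subset E e f :
  one_sperner E -> e \in E -> f \in E -> e != f -> ~~ (e \subset f).
Proof.
move=> HE eE fE ef; apply/negP; rewrite -setD_eq0 -cards_eq0 => /eqP ef0.
by have := HE e f eE fE ef; rewrite ef0 min0n.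
Qed.

Lemma one_sperner_card_setD E e f :
  one_sperner E -> e \in E -> f \in E -> 1 < #|e :\: f| -> #|f :\: e| = 1.
Proof.
move=> HE eE fE ef_gt1; have ef : e != f.
  by apply: contraTneq ef_gt1 => ->; rewrite setDv cards0.
by have := HE e f eE fE ef; lia.
Qed.

Section Image.
Variables (E : {set {set V}}) (g : {set V} -> {set V}).
Hypothesis g_setD : {in E &, forall a b, g a :\: g b = a :\: b}.

Lemma card_imset_setD : #|g @: E| = #|E|.
Proof.
apply: card_in_imset => a b aE bE gab; apply/eqP.
by rewrite eqEsubset -!setD_eq0 -(g_setD aE bE) -(g_setD bE aE) gab setDv eqxx.
Qed.

Lemma one_sperner_imset : one_sperner E -> one_sperner (g @: E).
Proof.
move=> HE _ _ /imsetP[a aE ->] /imsetP[b bE ->] gab.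
rewrite (g_setD aE bE) (g_setD bE aE); apply: HE => //.
by apply: contra_neq gab => ->.
Qed.

End Image.

Definition pivot E (z : V) :=
  forall a b, a \in E -> b \in E -> z \in a -> z \notin b -> a :\ z \subset b.

Section PivotExists.
Variables (E : {set {set V}}) (m : {set V}).
Hypotheses (HE : one_sperner E) (mE : m \in E).
Hypothesis m_min : forall e, e \in E -> #|m| <= #|e|.

Lemma card_min_setD e : e \in E -> e != m -> #|m :\: e| = 1.
Proof.
move=> eE em; have := HE eE mE em; have := m_min eE.
by have := cardsID e m; have := cardsID m e; rewrite setIC; lia.
Qed.

Lemma min_setD1_sub e z : e \in E -> z \in m -> z \notin e -> m :\ z \subset e.
Proof.
move=> eE zm ze; have em : e != m by apply: contraNneq ze => ->.
exact: setD_card1_sub (card_min_setD eE em) zm ze.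
Qed.

Lemma pivot_proper a b z x : a \in E -> b \in E -> z \in m ->
  z \in a -> z \notin b -> x \in a -> x \notin b -> x != z ->
  b :\: m \proper a :\: m.
Proof.
move=> aE bE zm za zb xa xb xz.
have m_b := min_setD1_sub bE zm zb.
have xm : x \notin m.
  by apply: contra xb => xm; apply: (subsetP m_b); rewrite !inE xz.
have am : a != m by apply: contraNneq xm => <-.
have /eqP/cards1P[w maw] := card_min_setD aE am.
have : w \in m :\: a by rewrite maw set11.
rewrite inE => /andP[wa wm].
have wb : w \in b.
  by apply: (subsetP m_b); rewrite !inE wm andbT; apply: contraNneq wa => ->.
have ab_gt1 : 1 < #|a :\: b|.
  have : [set z; x] \subset a :\: b by rewrite subUset !sub1set !inE za zb xa xb.
  by move/subset_leq_card; rewrite cards2 eq_sym xz.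
have b_a := setD_card1_sub (one_sperner_card_setD HE aE bE ab_gt1) wb wa.
apply/properP; split; last by exists x; rewrite !inE ?xm ?xa ?xb.
apply/subsetP => y; rewrite !inE => /andP[ym yb]; rewrite ym /=.
by apply: (subsetP b_a); rewrite !inE yb andbT; apply: contraNneq ym => ->.
Qed.

Variables (es : {set V}) (z : V).
Hypotheses (esE : es \in E) (zm : z \in m) (zes : z \notin es).
Hypothesis es_max : forall a, a \in E -> #|a :\: m| <= #|es :\: m|.

Lemma pivot_of_max : pivot E z.
Proof.
move=> a b aE bE za zb.
have a_es : a :\: m \subset es.
  apply/subsetP => x; rewrite inE => /andP[xm xa]; apply/negPn/negP => xes.
  have xz : x != z by apply: contraNneq xm => ->.
  have := proper_card (pivot_proper aE esE zm za zes xa xes xz).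
  by rewrite ltnNge es_max.
apply/subsetP => x; rewrite !inE => /andP[xz xa]; apply/negPn/negP => xb.
have ba := pivot_proper aE bE zm za zb xa xb xz.
have b_es : b \subset es.
  apply/subsetP => y yb; case: (boolP (y \in m)) => ym.
    apply: (subsetP (min_setD1_sub esE zm zes)).
    by rewrite !inE ym andbT; apply: contraNneq zb => <-.
  by apply: (subsetP a_es); apply: (subsetP (proper_sub ba)); rewrite inE ym yb.
have bes : b != es.
  by apply: contraTneq (proper_card ba) => ->; rewrite -leqNgt es_max.
by have := one_sperner_not_subset HE bE esE bes; rewrite b_es.
Qed.

End PivotExists.

Lemma pivot_exists E : one_sperner E -> 1 < #|E| ->
  exists2 z, z \in cover E & pivot E z.
Proof.
move=> HE E_gt1.
have /card_gt0P[e0 e0E] : 0 < #|E| by lia.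
case: (arg_minnP (fun e => #|e|) e0E) => m; rewrite -/(m \in E) => mE m_min.
have /card_gt0P[e1 e1E] : 0 < #|E :\ m|.
  by move: E_gt1; rewrite (cardsD1 m E) mE add1n ltnS.
case: (arg_maxnP (fun e => #|e :\: m|) e1E) => es.
rewrite -/(es \in E :\ m) !inE => /andP[esm esE] es_max.
have /eqP/cards1P[z mz] := card_min_setD HE mE m_min esE esm.
have : z \in m :\: es by rewrite mz set11.
rewrite inE => /andP[zes zm].
exists z; first by apply/bigcupP; exists m.
apply: (pivot_of_max HE mE m_min esE zm zes) => a aE.
case: (eqVneq a m) => [->|am]; first by rewrite setDv cards0.
by apply: es_max; rewrite -/(a \in E :\ m) !inE am.
Qed.

Section Decomposition.
Variables (S : {set V}) (E : {set {set V}}) (z : V).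
Hypotheses (E_sub : E \subset powerset S) (HE : one_sperner E).
Hypotheses (Ez : pivot E z) (zS : z \in S).

Let A := [set e in E | z \in e].
Let B := [set e in E | z \notin e].
Let U := \bigcup_(a in A) (a :\ z).
Let W := (S :\ z) :\: U.

Lemma subset_ground e : e \in E -> e \subset S.
Proof. by move/(subsetP E_sub); rewrite powersetE. Qed.

Lemma card_pivot_split : #|E| = #|A| + #|B|.
Proof.
rewrite -(cardsID [set e : {set V} | z \in e] E); congr (_ + _).
  by apply: eq_card => e; rewrite !inE andbC.
by apply: eq_card => e; rewrite !inE andbC.
Qed.

Lemma pivot_union_sub b : b \in B -> U \subset b.
Proof.
rewrite inE => /andP[bE zb]; apply/bigcupsP => a; rewrite inE => /andP[aE za].
exact: Ez.
Qed.

Lemma card_pivot_ground : #|S| = (#|U| + #|W|).+1.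
Proof.
have US : U \subset S :\ z.
  apply/bigcupsP => a; rewrite inE => /andP[aE _].
  exact: setSD (subset_ground aE).
by rewrite (cardsD1 z S) zS -(cardsID U (S :\ z)) (setIidPr US).
Qed.

Let A' := [set a :\ z | a in A].
Let B' := [set b :\: U | b in B].

Lemma pivot_setD1 : {in A &, forall a a', (a :\ z) :\: (a' :\ z) = a :\: a'}.
Proof.
by move=> a a' _; rewrite inE => /andP[_ za']; rewrite setDD_sub ?sub1set.
Qed.

Lemma pivot_setD_union :
  {in B &, forall b b', (b :\: U) :\: (b' :\: U) = b :\: b'}.
Proof. by move=> b b' _ b'B; rewrite setDD_sub ?pivot_union_sub. Qed.

Lemma pivot_image_through_sub : A' \subset powerset U.
Proof.
by apply/subsetP => _ /imsetP[a aA ->]; rewrite powersetE (bigcup_sup a).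
Qed.

Lemma pivot_image_avoiding_sub : B' \subset powerset W.
Proof.
apply/subsetP => _ /imsetP[b bB ->]; rewrite powersetE setSD //.
by move: bB; rewrite inE subsetD1 => /andP[/subset_ground-> ->].
Qed.

Lemma pivot_degenerate : #|U| = 0 -> #|W| = 0 -> #|A| = 0 \/ #|B| = 0.
Proof.
move=> /eqP; rewrite cards_eq0 => /eqP U0 /eqP; rewrite cards_eq0 => /eqP W0.
case: (set_0Vmem B) => [->|[b bB]]; [by right; rewrite cards0 | left].
have : b :\: U \in B' by apply: imset_f.
move/(subsetP pivot_image_avoiding_sub).
rewrite powersetE U0 W0 setD0 subset0 => /eqP b0.
apply/eqP; rewrite cards_eq0 -subset0; apply/subsetP => a.
rewrite inE => /andP[aE za]; move: bB; rewrite inE => /andP[bE zb].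
have ba : b != a by apply: contraNneq zb => ->.
by have := one_sperner_not_subset HE bE aE ba; rewrite b0 sub0set.
Qed.

Lemma card_pivot_le :
  (forall S', #|S'| < #|S| -> forall E', E' \subset powerset S' ->
     one_sperner E' -> #|E'| <= maxn #|S'| 1) ->
  #|E| <= maxn #|S| 1.
Proof.
move=> IH.
have AE : A \subset E by apply/subsetP => e; rewrite inE => /andP[].
have BE : B \subset E by apply/subsetP => e; rewrite inE => /andP[].
have HA := one_sperner_subset AE HE; have HB := one_sperner_subset BE HE.
have bound_A : #|A'| <= maxn #|U| 1.
  apply: IH pivot_image_through_sub (one_sperner_imset pivot_setD1 HA).
  by rewrite card_pivot_ground; lia.
have bound_B : #|B'| <= maxn #|W| 1.
  apply: IH pivot_image_avoiding_sub (one_sperner_imset pivot_setD_union HB).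
  by rewrite card_pivot_ground; lia.
move: bound_A bound_B; rewrite card_pivot_split card_pivot_ground.
rewrite (card_imset_setD pivot_setD1) (card_imset_setD pivot_setD_union).
by have := pivot_degenerate; lia.
Qed.

End Decomposition.

(* The bound [maxn _ 1] is needed: [set set0] is 1-Sperner on the empty set. *)
Lemma card_one_sperner_le S E :
  E \subset powerset S -> one_sperner E -> #|E| <= maxn #|S| 1.
Proof.
elim: {S}_.+1 {-2}S (ltnSn #|S|) E => // n IH S Sn E E_sub HE.
case: (leqP #|E| 1) => [E_le1 | E_gt1].
  by rewrite (leq_trans E_le1) ?leq_maxr.
have [z zE Ez] := pivot_exists HE E_gt1.
have zS : z \in S.
  by case/bigcupP: zE => e eE; apply/subsetP; apply: subset_ground eE.
apply: (card_pivot_le E_sub HE Ez zS) => S' S'S; apply: IH.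
exact: leq_trans S'S Sn.
Qed.

End OneSperner.

Theorem corollary16 (V : finType) (E : {set {set V}}) :
  0 < #|V| -> one_sperner E -> #|E| <= #|V|.
Proof.
move=> V_gt0 HE.
have E_sub : E \subset powerset [set: V].
  by apply/subsetP => e _; rewrite powersetE subsetT.
by have := card_one_sperner_le E_sub HE; rewrite cardsT (maxn_idPl V_gt0).
Qed.
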